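(* Let $\mathbb{K}$ be a field and $f=a_0(x)+a_1(x)y+\cdots+a_n(x)y^n\in\mathbb{K}[x,y]$ with $n\geq 2$, $a_0,\ldots,a_{n-1}\in\mathbb{K}[x]$, $a_n\in\mathbb{K}$, $a_0a_n\neq 0$, and suppose there exists an index $j$ with $0\leq j\leq n-1$ such that $\deg a_j>\max_{i\neq j}\deg a_i$. Then $f$ is a product of at most $n-j$ irreducible polynomials over $\mathbb{K}[x]$. In particular, if $j=n-1$, then $f$ is irreducible over $\mathbb{K}[x]$.
   Context: $f$ is regarded as a polynomial in $y$ with coefficients in $\mathbb{K}[x]$; ''a product of at most $k$ irreducible polynomials over $\mathbb{K}[x]$'' means that in the factorization of $f$ into irreducible elements of $\mathbb{K}[x][y]$ the number of factors, counted with multiplicities, is at most $k$. *)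

From HB Require Import structures.
From mathcomp Require Import all_boot all_order all_algebra.
Set Implicit Arguments. Unset Strict Implicit. Unset Printing Implicit Defensive.
Import GRing.Theory.
Local Open Scope ring_scope.

Definition irreducible_elt (R : idomainType) (p : R) : Prop :=
  [/\ p != 0, p \isn't a GRing.unit &
      forall a b : R, p = a * b -> a \is a GRing.unit \/ b \is a GRing.unit].

Definition prod_at_most_irr (R : idomainType) (k : nat) (p : R) : Prop :=
  exists (u : R) (s : seq R),
    [/\ u \is a GRing.unit, (size s <= k)%N,
        (forall g, g \in s -> irreducible_elt g) &
        p = u * \prod_(g <- s) g].

From HB Require Import structures.
From mathcomp Require Import all_boot all_order all_algebra.
From mathcomp Require Import zify.
From Stdlib Require Import Classical.
Set Implicit Arguments. Unset Strict Implicit. Unset Printing Implicit Defensive.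
Import GRing.Theory.
Local Open Scope ring_scope.

(* Let L(p) be the leading coefficient of p in K[x][y] viewed as a polynomial
   in x; L is multiplicative, and the dominance of a_j gives L(f) = c y^j.
   Since a_n is a nonzero constant, every non-unit factor g of f has a constant
   leading y-coefficient and positive y-degree, and L(g) divides y^j.  If L(g)
   had the full y-degree of g, then g would lie in K[y]; as g(x,0) divides
   a_0 != 0, L(g) = g would then be coprime to y, hence constant, which is
   absurd.  So deg_y L(g) <= deg_y g - 1 for each of the k factors, and summing
   over them gives j <= n - k. *)

Section UnitLeadCoef.

Variable R : idomainType.
Implicit Types p : {poly R}.

Lemma size_gt1_nonunit p : p != 0 -> lead_coef p \is a GRing.unit ->
  p \isn't a GRing.unit -> (1 < size p)%N.
Proof.
move=> p0 lpU; apply: contraNT; rewrite -leqNgt => sp_le1.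
have sp1 : size p = 1%N by apply/eqP; rewrite eqn_leq sp_le1 size_poly_gt0.
by move: lpU; rewrite poly_unitE lead_coefE sp1.
Qed.

Lemma predn_size_prod_seq (I : eqType) (s : seq I) (F : I -> {poly R}) :
  {in s, forall i, F i != 0} ->
  (size (\prod_(i <- s) F i)).-1 = \sum_(i <- s) (size (F i)).-1.
Proof.
elim: s => [|i s IHs] nzF; first by rewrite !big_nil size_poly1.
have nzFs : {in s, forall k, F k != 0}.
  by move=> k ks; apply: nzF; rewrite inE ks orbT.
have Fi0 : F i != 0 by apply: nzF; rewrite mem_head.
have P0 : \prod_(k <- s) F k != 0 by rewrite prodf_seq_neq0; apply/allP.
rewrite !big_cons size_mul // -IHs //.
by move: Fi0 P0; rewrite -!size_poly_gt0; lia.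
Qed.

Lemma unit_lead_coef_factorization p : p != 0 -> lead_coef p \is a GRing.unit ->
  exists u (s : seq {poly R}), [/\ u \is a GRing.unit,
    {in s, forall g, irreducible_elt g} & p = u * \prod_(g <- s) g].
Proof.
elim: {p}_.+1 {-2}p (ltnSn (size p)) => // m IHm p sp p0 lpU.
have [pU|pN] := boolP (p \is a GRing.unit).
  by exists p, [::]; rewrite big_nil mulr1.
have [[a [b [pab aN bN]]]|p_irr] := classic (exists a b,
    [/\ p = a * b, a \isn't a GRing.unit & b \isn't a GRing.unit]).
  have a0 : a != 0 by apply: contra p0 => /eqP a0; rewrite pab a0 mul0r.
  have b0 : b != 0 by apply: contra p0 => /eqP b0; rewrite pab b0 mulr0.
  have /andP[laU lbU] : (lead_coef a \is a GRing.unit) && (lead_coef b \is a GRing.unit).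
    by rewrite -unitrM -lead_coefM -pab.
  have sa := size_gt1_nonunit a0 laU aN.
  have sb := size_gt1_nonunit b0 lbU bN.
  have spab : size p = (size a + size b).-1 by rewrite pab size_mul.
  have sa_m : (size a < m)%N by lia.
  have sb_m : (size b < m)%N by lia.
  have [ua [sa' [uaU sa'I aE]]] := IHm a sa_m a0 laU.
  have [ub [sb' [ubU sb'I bE]]] := IHm b sb_m b0 lbU.
  exists (ua * ub), (sa' ++ sb'); split.
  - by rewrite unitrM uaU ubU.
  - by move=> g; rewrite mem_cat => /orP[/sa'I|/sb'I].
  - by rewrite big_cat /= pab aE bE mulrACA.
exists 1, [:: p]; rewrite big_seq1 mul1r; split=> [||//]; first exact: unitr1.
move=> g; rewrite inE => /eqP->; split=> // a b pab.
have [aU|aN] := boolP (a \is a GRing.unit); first by left.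
have [bU|bN] := boolP (b \is a GRing.unit); first by right.
by case: p_irr; exists a, b.
Qed.

End UnitLeadCoef.

Section LeadCoefY.

Variable R : idomainType.
Implicit Types p q f : {poly {poly R}}.

(* polyXY names the inner variable 'Y, so this is the leading coefficient of p
   in the paper's x, as a polynomial in the outer variable y. *)
Definition lead_coefY p : {poly R} := lead_coef (swapXY p).

Lemma coef_lead_coefY p i : (lead_coefY p)`_i = p`_i`_(sizeY p).-1.
Proof. by rewrite /lead_coefY lead_coefE coef_swapXY sizeYE. Qed.

Lemma lead_coefY_eq0 p : (lead_coefY p == 0) = (p == 0).
Proof. by rewrite lead_coef_eq0 swapXY_eq0. Qed.

Lemma size_lead_coefY p : (size (lead_coefY p) <= size p)%N.
Proof.
by apply/leq_sizeP => i le_p_i; rewrite coef_lead_coefY (nth_default _ le_p_i) coef0.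
Qed.

Lemma lead_coefYM p q : lead_coefY (p * q) = lead_coefY p * lead_coefY q.
Proof. by rewrite /lead_coefY rmorphM lead_coefM. Qed.

Lemma lead_coefY_prod (s : seq {poly {poly R}}) :
  lead_coefY (\prod_(g <- s) g) = \prod_(g <- s) lead_coefY g.
Proof. by rewrite /lead_coefY rmorph_prod lead_coef_prod. Qed.

Lemma sizeY_le1 p : (size (lead_coef p) <= 1)%N ->
  size (lead_coefY p) = size p -> (sizeY p <= 1)%N.
Proof.
move=> lp_le1 eq_size; have [->|p0] := eqVneq p 0.
  by rewrite sizeYE raddf0 size_poly0.
have : (lead_coefY p)`_(size p).-1 != 0.
  by rewrite -eq_size -lead_coefE lead_coef_eq0 lead_coefY_eq0.
rewrite coef_lead_coefY -lead_coefE; apply: contraNT; rewrite -ltnNge => sYp.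
by apply/eqP/nth_default; rewrite (leq_trans lp_le1) // ltn_predRL.
Qed.

Lemma lead_coefY_dominant f (j : nat) :
  (forall i, i != j -> leq (size f`_i).+1 (size f`_j)) ->
  lead_coefY f = lead_coef f`_j *: 'X^j.
Proof.
move=> dom.
have sYf : sizeY f = size f`_j.
  apply/eqP; rewrite eqn_leq max_size_coefXY andbT.
  apply/bigmax_leqP => /= i _.
  by have [->|/dom/ltnW] := eqVneq (val i) j.
apply/polyP => i; rewrite coef_lead_coefY sYf coefZ coefXn.
have [->|/dom lt_ij] := eqVneq i j; first by rewrite mulr1 lead_coefE.
by rewrite mulr0 nth_default // -ltnS (ltn_predK lt_ij).
Qed.

End LeadCoefY.

Section FieldCoefficients.

Variable K : fieldType.
Implicit Types f g u : {poly {poly K}}.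

Lemma poly_unitfE (p : {poly K}) : (p \is a GRing.unit) = (size p == 1%N).
Proof.
rewrite poly_unitE unitfE; case: eqP => //= sp1.
have -> : p`_0 = lead_coef p by rewrite lead_coefE sp1.
by rewrite lead_coef_eq0 -size_poly_gt0 sp1.
Qed.

Lemma size_lead_coefY_lt g j : g`_0 != 0 -> (size (lead_coef g) <= 1)%N ->
  (1 < size g)%N -> lead_coefY g %| 'X^j -> (size (lead_coefY g) < size g)%N.
Proof.
move=> g0 lg_le1 sg dvd_gX; rewrite ltn_neqAle size_lead_coefY andbT.
apply/negP => /eqP eq_size.
have sYg : (sizeY g <= 1)%N := sizeY_le1 lg_le1 eq_size.
have nroot0 : ~~ root (lead_coefY g) 0.
  rewrite rootE horner_coef0 coef_lead_coefY.
  have -> : (sizeY g).-1 = 0%N by lia.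
  apply: contra g0 => /eqP g00.
  by rewrite (size1_polyC (leq_trans (max_size_coefXY g 0) sYg)) g00.
have : coprimep (lead_coefY g) (lead_coefY g).
  by apply: coprimep_dvdl dvd_gX _; apply: coprimep_expr; rewrite coprimepX.
by rewrite coprimepp eq_size => /eqP sg1; rewrite sg1 in sg.
Qed.

Lemma size_nonunit_factors_le f u (s : seq {poly {poly K}}) c j :
  lead_coef f \is a GRing.unit -> f`_0 != 0 ->
  c != 0 -> lead_coefY f = c *: 'X^j ->
  u \is a GRing.unit -> {in s, forall g, g \isn't a GRing.unit} ->
  f = u * \prod_(g <- s) g -> (size s + j <= (size f).-1)%N.
Proof.
move=> lfU f0 c0 lcYf uU sN fE.
have factorP g : g \in s ->
    [/\ g != 0, (1 < size g)%N & (size (lead_coefY g) < size g)%N].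
  move=> gs; have {}fE : f = g * (u * \prod_(h <- rem g s) h).
    by rewrite fE (big_rem _ gs) mulrCA.
  have g0 : g != 0 by apply: contra f0 => /eqP g0; rewrite fE g0 mul0r coef0.
  have lgU : lead_coef g \is a GRing.unit.
    by move: lfU; rewrite fE lead_coefM unitrM => /andP[].
  have sg := size_gt1_nonunit g0 lgU (sN g gs).
  split=> //; apply: (@size_lead_coefY_lt _ j) => //.
  - by apply: contra f0; rewrite fE coef0M => /eqP->; rewrite mul0r.
  - by move: lgU; rewrite poly_unitfE => /eqP->.
  - by rewrite -(dvdpZr _ _ c0) -lcYf fE lead_coefYM dvdp_mulIl.
have su : size u = 1%N by move: uU; rewrite poly_unitE => /andP[/eqP].
have fE' : f = \prod_(g <- u :: s) g by rewrite big_cons.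
have nz : {in u :: s, forall g, g != 0}.
  by move=> g; rewrite inE => /predU1P[->|/factorP[]//]; rewrite -size_poly_gt0 su.
have sLu : size (lead_coefY u) = 1%N.
  apply/eqP; rewrite eqn_leq size_poly_gt0 lead_coefY_eq0 nz ?mem_head // andbT.
  by rewrite -su size_lead_coefY.
have degf : (size f).-1 = \sum_(g <- s) (size g).-1.
  by rewrite fE' predn_size_prod_seq // big_cons su.
have degLf : j = \sum_(g <- s) (size (lead_coefY g)).-1.
  have -> : j = (size (lead_coefY f)).-1 by rewrite lcYf size_scale // size_polyXn.
  rewrite fE' lead_coefY_prod predn_size_prod_seq; last first.
    by move=> g /nz; rewrite lead_coefY_eq0.
  by rewrite big_cons sLu.
rewrite degf degLf addnC -sum1_size -big_split /= big_seq [leqRHS]big_seq.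
apply: leq_sum => g /factorP[_ sg]; rewrite addn1 ltn_predRL.
by case: (size (lead_coefY g)) => [|a].
Qed.

End FieldCoefficients.

Theorem theorem5 (K : fieldType) (n : nat) (f : {poly {poly K}}) (j : nat) :
  leq 2 n ->
  size f = n.+1 ->
  leq (size f`_n) 1 ->
  f`_0 * f`_n != 0 ->
  leq j n.-1 ->
  (forall i : nat, leq i n -> i != j -> leq (size f`_i).+1 (size f`_j)) ->
  prod_at_most_irr (n - j) f /\ (j = n.-1 -> irreducible_elt f).
Proof.
move=> n2 sf sfn; rewrite mulf_eq0 negb_or => /andP[a0 an] jn hj.
have f0 : f != 0 by rewrite -size_poly_gt0 sf.
have lfU : lead_coef f \is a GRing.unit.
  by rewrite poly_unitfE lead_coefE sf eqn_leq sfn size_poly_gt0.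
have nj : n != j by lia.
have dom i : i != j -> leq (size f`_i).+1 (size f`_j).
  have [/hj//|ni _] := leqP i n.
  by rewrite nth_default ?sf // size_poly0 (leq_ltn_trans _ (hj n _ nj)).
have cj : lead_coef f`_j != 0.
  by rewrite lead_coef_eq0 -size_poly_gt0 (leq_ltn_trans _ (dom n nj)).
have bound u s : u \is a GRing.unit -> {in s, forall g, g \isn't a GRing.unit} ->
    f = u * \prod_(g <- s) g -> (size s <= n - j)%N.
  move=> uU sN fE; rewrite leq_subRL ?(leq_trans jn (leq_pred n)) // addnC.
  have := size_nonunit_factors_le lfU a0 cj (lead_coefY_dominant dom) uU sN fE.
  by rewrite sf.
split.
  have [u [s [uU sI fE]]] := unit_lead_coef_factorization f0 lfU.
  by exists u, s; split=> //; apply: bound uU _ fE => g /sI[].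
move=> jE; split=> //; first by rewrite poly_unitE sf eqSS; case: eqP n2 => // ->.
move=> a b fab.
have [aU|aN] := boolP (a \is a GRing.unit); first by left.
have [bU|bN] := boolP (b \is a GRing.unit); first by right.
suff : (2 <= n - j)%N by lia.
apply: (bound 1 [:: a; b]); first exact: unitr1.
- by move=> g; rewrite !inE => /orP[]/eqP->.
- by rewrite mul1r big_cons big_seq1.
Qed.
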